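(* Let $f:(X,M_X,N_X)\to(Y,M_Y,N_Y)$ be an isomorphism in the category $\mathsf{EMS}$ between locally determined enhanced measurable spaces. If $(Y,M_Y,N_Y)$ is compact and strictly localizable, then so is $(X,M_X,N_X)$.
   Context: Enhanced measurable space $(X,M,N)$: $M$ a $\sigma$-algebra on $X$, $N\subset M$ closed under arbitrary subsets and countable unions. $\mathsf{EMS}$: morphisms are classes of premaps $f:X'\to Y$ ($X'\subset X$, $X\setminus X'\in N_X$, $f^*M_Y\subset M_X$, $f^*N_Y\subset N_X$), composed as partial maps, modulo $f\approx g$ iff $f^*m\oplus g^*m\in N_X$ for all $m\in M_Y$. Finite measure: countably additive $\mu:M\to\mathbb{C}$ vanishing on $N$; faithful if $\mu$ vanishing on all measurable subsets of $m$ implies $m\in N$. $m\in M$ (or the whole space) is $\sigma$-finite if its induced space $(m,\{m'\in M:m'\subset m\},\{n\in N:n\subset m\})$ admits a faithful finite measure. Strictly localizable: there is a partition $\{X_i\}\subset M$ of $X$ into $\sigma$-finite pieces with $A\in M$ (resp. $N$) iff $A\cap X_i\in M$ (resp. $N$) for all $i$. Compact: there is a compact class $K\subset M$ (every subfamily with the finite intersection property has nonempty intersection) such that every $m\in M\setminus N$ contains some $k\in K\setminus N$. Locally determined: for every $A\subset X$, if $A\cap F\in M$ (resp. $A\cap F\in N$) for all $\sigma$-finite $F\in M$, then $A\in M$ (resp. $A\in N$). *)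

From Stdlib Require Import Reals List.
From Coquelicot Require Import Coquelicot.
Set Implicit Arguments.

Definition sset (X : Type) := X -> Prop.
Definition ssubset {X} (A B : sset X) := forall x, A x -> B x.
Definition sinter {X} (A B : sset X) : sset X := fun x => A x /\ B x.
Definition scompl {X} (A : sset X) : sset X := fun x => ~ A x.
Definition sfull {X} : sset X := fun _ => True.
Definition sempty {X} : sset X := fun _ => False.
Definition sbigcup {X} (A : nat -> sset X) : sset X := fun x => exists n, A n x.
Definition ssymdiff {X} (A B : sset X) : sset X :=
  fun x => (A x /\ ~ B x) \/ (B x /\ ~ A x).

Record ems (X : Type) := {
  M : sset X -> Prop;
  N : sset X -> Prop;
  M_empty : M sempty;
  M_compl : forall A, M A -> M (scompl A);
  M_bigcup : forall A : nat -> sset X, (forall n, M (A n)) -> M (sbigcup A);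
  N_sub_M : forall A, N A -> M A;
  N_subset : forall A B, N B -> ssubset A B -> N A;
  N_bigcup : forall A : nat -> sset X, (forall n, N (A n)) -> N (sbigcup A)
}.
Arguments M {X}. Arguments N {X}.

(* Premaps X' -> Y (X' ⊆ X) are encoded as X -> option Y; the domain X' is
   the set of x with f x = Some _. *)
Definition dom {X Y} (f : X -> option Y) : sset X := fun x => exists y, f x = Some y.
Definition pre {X Y} (f : X -> option Y) (A : sset Y) : sset X :=
  fun x => exists y, f x = Some y /\ A y.

Definition premap {X Y} (EX : ems X) (EY : ems Y) (f : X -> option Y) : Prop :=
  N EX (scompl (dom f)) /\
  (forall A, M EY A -> M EX (pre f A)) /\
  (forall A, N EY A -> N EX (pre f A)).

Definition pcomp {X Y Z} (g : Y -> option Z) (f : X -> option Y) : X -> option Z :=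
  fun x => match f x with Some y => g y | None => None end.
Definition pid {X} : X -> option X := fun x => Some x.

Definition pequiv {X Y} (EX : ems X) (EY : ems Y) (f g : X -> option Y) : Prop :=
  forall A, M EY A -> N EX (ssymdiff (pre f A) (pre g A)).

Definition ems_iso {X Y} (EX : ems X) (EY : ems Y) (f : X -> option Y) : Prop :=
  premap EX EY f /\
  exists g : Y -> option X, premap EY EX g /\
    pequiv EX EX (pcomp g f) pid /\ pequiv EY EY (pcomp f g) pid.

Definition faithful_finite_measure_on {X} (E : ems X) (m : sset X)
  (mu : sset X -> C) : Prop :=
  (forall A, N E A -> ssubset A m -> mu A = 0%C) /\
  (forall A : nat -> sset X,
      (forall n, M E (A n) /\ ssubset (A n) m) ->
      (forall i j x, i <> j -> A i x -> A j x -> False) ->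
      is_series (fun n => mu (A n)) (mu (sbigcup A))) /\
  (forall B, M E B -> ssubset B m ->
      (forall B', M E B' -> ssubset B' B -> mu B' = 0%C) -> N E B).

Definition sigma_finite_set {X} (E : ems X) (m : sset X) : Prop :=
  M E m /\ exists mu, faithful_finite_measure_on E m mu.

Definition strictly_localizable {X} (E : ems X) : Prop :=
  exists (I : Type) (P : I -> sset X),
    (forall i, M E (P i)) /\
    (forall i j x, P i x -> P j x -> i = j) /\
    (forall x, exists i, P i x) /\
    (forall i, sigma_finite_set E (P i)) /\
    (forall A, M E A <-> forall i, M E (sinter A (P i))) /\
    (forall A, N E A <-> forall i, N E (sinter A (P i))).

Definition finite_inter_property {X} (F : sset X -> Prop) : Prop :=
  forall l : list (sset X), (forall A, In A l -> F A) ->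
    exists x, forall A, In A l -> A x.

Definition compact_class {X} (K : sset X -> Prop) : Prop :=
  forall F : sset X -> Prop, (forall A, F A -> K A) -> (exists A, F A) ->
    finite_inter_property F -> exists x, forall A, F A -> A x.

Definition ems_compact {X} (E : ems X) : Prop :=
  exists K : sset X -> Prop, compact_class K /\ (forall A, K A -> M E A) /\
    (forall m, M E m -> ~ N E m -> exists k, K k /\ ~ N E k /\ ssubset k m).

Definition locally_determined {X} (E : ems X) : Prop :=
  forall A : sset X,
    ((forall F, sigma_finite_set E F -> M E (sinter A F)) -> M E A) /\
    ((forall F, sigma_finite_set E F -> N E (sinter A F)) -> N E A).

(* Strict localizability pulls back along f: the pieces f^-1(P_i), together with
   the null set where f is undefined, partition X into sigma-finite sets.  That they also
   determine measurability and nullness uses local determinacy of X and a countable chain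
   condition: a faithful finite measure on F sees only countably many disjoint sets meeting F
   in a non-null set.

   For compactness, a compact class K on Y is first enlarged to its hull (countable
   intersections of finite unions), still compact by Marczewski's argument, and then
   transported to the sets A of X that correspond exactly, under f and g, to a member of the
   hull.  Density is the real work: a non-null set must contain a non-null hull member k with
   k ⊆ (f∘g)^-1(k), since f∘g is the identity only almost everywhere.  Inside a sigma-finite
   piece, the faithful complex measure yields a real signed measure λ with λ(S) ≠ 0; k is the
   intersection of a decreasing sequence u_{n+1} ⊆ u_n ∩ (f∘g)^-1(u_n) of finite unions of
   members of K, each chosen by inner approximation so that λ(u_n) stays within |λ(S)|/2 of
   λ(S), whence λ(k) ≠ 0. *)

From Stdlib Require Import Reals List Lra Lia Arith.
From Stdlib Require Import Classical ClassicalEpsilon FunctionalExtensionality PropExtensionality.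
From Stdlib Require Cantor.
From Coquelicot Require Import Coquelicot.
From mathcomp Require classical_sets.

Definition sunion {X} (A B : sset X) : sset X := fun x => A x \/ B x.
Definition sdiff {X} (A B : sset X) : sset X := fun x => A x /\ ~ B x.
Definition sbigcap {X} (A : nat -> sset X) : sset X := fun x => forall n, A n x.
Definition pairwise_disjoint {X} (A : nat -> sset X) : Prop :=
  forall i j x, i <> j -> A i x -> A j x -> False.

Lemma sset_ext {X} (A B : sset X) : (forall x, A x <-> B x) -> A = B.
Proof.
intros H; apply functional_extensionality; intros x; apply propositional_extensionality; auto.
Qed.

Section EmsClosure.
Context {X : Type} (E : ems X).

Lemma M_ext A B : (forall x, A x <-> B x) -> M E A -> M E B.
Proof. intros H HA; rewrite <- (sset_ext A B H); exact HA. Qed.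

Lemma N_ext A B : (forall x, A x <-> B x) -> N E A -> N E B.
Proof. intros H HA; rewrite <- (sset_ext A B H); exact HA. Qed.

Lemma M_union A B : M E A -> M E B -> M E (sunion A B).
Proof.
intros HA HB.
apply (M_ext (sbigcup (fun n => match n with 0 => A | _ => B end))).
- intros x; unfold sbigcup, sunion; split.
  + intros [[|n] H]; auto.
  + intros [H|H]; [exists 0%nat|exists 1%nat]; auto.
- apply M_bigcup; intros [|n]; auto.
Qed.

Lemma M_inter A B : M E A -> M E B -> M E (sinter A B).
Proof.
intros HA HB.
apply (M_ext (scompl (sunion (scompl A) (scompl B)))).
- intros x; unfold scompl, sunion, sinter; tauto.
- apply M_compl, M_union; apply M_compl; auto.
Qed.

Lemma M_diff A B : M E A -> M E B -> M E (sdiff A B).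
Proof. intros; apply M_inter; auto; apply M_compl; auto. Qed.

Lemma M_bigcap (A : nat -> sset X) : (forall n, M E (A n)) -> M E (sbigcap A).
Proof.
intros H.
apply (M_ext (scompl (sbigcup (fun n => scompl (A n))))).
- intros x; unfold scompl, sbigcup, sbigcap; split.
  + intros H1 n. apply NNPP; intros H2; apply H1; exists n; auto.
  + intros H1 [n H2]; auto.
- apply M_compl, M_bigcup; intros n; apply M_compl; auto.
Qed.

Lemma N_union A B : N E A -> N E B -> N E (sunion A B).
Proof.
intros HA HB.
apply (N_ext (sbigcup (fun n => match n with 0 => A | _ => B end))).
- intros x; unfold sbigcup, sunion; split.
  + intros [[|n] H]; auto.
  + intros [H|H]; [exists 0%nat|exists 1%nat]; auto.
- apply N_bigcup; intros [|n]; auto.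
Qed.

Lemma M_finite_union {J} (G : J -> sset X) (L : list J) :
  (forall j, In j L -> M E (G j)) -> M E (fun x => exists j, In j L /\ G j x).
Proof.
induction L as [|a L IH]; intros H.
- apply (M_ext sempty). { intros x; split; [intros []|intros [j [[] _]]]. }
  apply M_empty.
- apply (M_ext (sunion (G a) (fun x => exists j, In j L /\ G j x))).
  + intros x; unfold sunion; split.
    * intros [H1|[j [H1 H2]]]; [exists a|exists j]; simpl; auto.
    * intros [j [[<-|H1] H2]]; [left|right]; eauto.
  + apply M_union; [apply H; simpl; auto|apply IH; intros j Hj; apply H; simpl; auto].
Qed.

Lemma N_finite_union {J} (G : J -> sset X) (L : list J) : N E sempty ->
  (forall j, In j L -> N E (G j)) -> N E (fun x => exists j, In j L /\ G j x).
Proof.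
intros N0; induction L as [|a L IH]; intros H.
- apply (N_subset E N0). intros x [j [[] _]].
- apply (N_ext (sunion (G a) (fun x => exists j, In j L /\ G j x))).
  + intros x; unfold sunion; split.
    * intros [H1|[j [H1 H2]]]; [exists a|exists j]; simpl; auto.
    * intros [j [[<-|H1] H2]]; [left|right]; eauto.
  + apply N_union; [apply H; simpl; auto|apply IH; intros j Hj; apply H; simpl; auto].
Qed.

End EmsClosure.

Lemma is_series_eventually_zero {K : AbsRing} {V : NormedModule K} (a : nat -> V) k :
  (forall n, (k < n)%nat -> a n = zero) -> is_series a (sum_n a k).
Proof.
intros Ha. apply filterlim_locally. intros eps. exists k. intros n Hn.
replace (sum_n a n) with (sum_n a k); [apply ball_center|].
induction Hn as [|n Hn IH]; [reflexivity|].
rewrite sum_Sn, Ha by lia. rewrite plus_zero_r. exact IH.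
Qed.

Lemma is_series_partial_sums (a : nat -> R) l : is_series a l ->
  forall eps : posreal, exists n0, forall n, (n0 <= n)%nat -> Rabs (sum_n a n - l) < eps.
Proof. intros H. exact (proj2 (is_lim_seq_spec (sum_n a) l) H). Qed.

Definition C_component (p : C -> R) : Prop := p = fst \/ p = snd.

Lemma C_component_nonzero (z : C) : z <> 0%C -> exists p, C_component p /\ p z <> 0.
Proof.
intros Hz. destruct z as [r s].
destruct (Req_dec r 0) as [->|hr]; [destruct (Req_dec s 0) as [->|hs]|].
- contradiction.
- exists snd. split; [right|]; auto.
- exists fst. split; [left|]; auto.
Qed.

Lemma is_series_component (p : C -> R) (a : nat -> C) l : C_component p ->
  is_series a l -> is_series (fun n => p (a n)) (p l).
Proof.
intros Hp H. apply filterlim_locally. intros eps.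
generalize (proj1 (filterlim_locally _ _) H eps). apply filter_imp.
intros n Hn.
assert (Hsum : forall m, sum_n a m = (sum_n (fun k => fst (a k)) m, sum_n (fun k => snd (a k)) m)).
{ induction m as [|m IH].
  - rewrite !sum_O. now destruct (a 0%nat).
  - rewrite !sum_Sn, IH. now destruct (a (S m)). }
rewrite Hsum in Hn. destruct Hn as [H1 H2]. destruct Hp; subst p; assumption.
Qed.

Definition signed_measure {Y} (E : ems Y) (lam : sset Y -> R) : Prop :=
  (forall A, N E A -> lam A = 0) /\
  (forall A : nat -> sset Y, (forall n, M E (A n)) -> pairwise_disjoint A ->
     is_series (fun n => lam (A n)) (lam (sbigcup A))).

Definition prefix_union {Y} (e : nat -> sset Y) (n : nat) : sset Y :=
  fun y => exists j, (j <= n)%nat /\ e j y.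

Lemma decreasing_sets {Y} (u : nat -> sset Y) : (forall n, ssubset (u (S n)) (u n)) ->
  forall a b, (a <= b)%nat -> ssubset (u b) (u a).
Proof.
intros Hu a b Hab; induction Hab as [|b Hab IH]; intros y Hy; [exact Hy|apply IH, Hu, Hy].
Qed.

Section SignedMeasure.
Context {Y : Type} (E : ems Y) (lam : sset Y -> R) (Hlam : signed_measure E lam)
  (N0 : N E sempty).

Lemma signed_measure_null A : N E A -> lam A = 0.
Proof. apply (proj1 Hlam). Qed.

Lemma signed_measure_bigcup (A : nat -> sset Y) : (forall n, M E (A n)) ->
  pairwise_disjoint A -> is_series (fun n => lam (A n)) (lam (sbigcup A)).
Proof. apply (proj2 Hlam). Qed.

Lemma signed_measure_union A B : M E A -> M E B -> (forall x, A x -> B x -> False) ->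
  lam (sunion A B) = lam A + lam B.
Proof.
intros HA HB HAB.
set (s := fun n : nat => match n with 0 => A | 1 => B | _ => sempty end).
assert (Hs : is_series (fun n => lam (s n)) (lam (sbigcup s))).
{ apply signed_measure_bigcup.
  - intros [|[|n]]; simpl; auto. apply M_empty.
  - intros [|[|i]] [|[|j]] x Hij; simpl; try tauto; eauto. }
assert (Hs' : is_series (fun n => lam (s n)) (sum_n (fun n => lam (s n)) 1)).
{ apply (@is_series_eventually_zero R_AbsRing R_NormedModule). intros [|[|n]] Hn; [lia|lia|].
  apply signed_measure_null, N0. }
replace (sbigcup s) with (sunion A B) in Hs.
- apply is_series_unique in Hs, Hs'. rewrite <- Hs, Hs'.
  rewrite sum_Sn, sum_O. reflexivity.
- apply sset_ext; intros x; unfold sbigcup, sunion; split.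
  + intros [H|H]; [exists 0%nat|exists 1%nat]; auto.
  + intros [[|[|n]] H]; simpl in H; tauto.
Qed.

Lemma signed_measure_split A B : M E A -> M E B -> lam A = lam (sinter A B) + lam (sdiff A B).
Proof.
intros HA HB. rewrite <- signed_measure_union.
- f_equal. apply sset_ext; intros x; unfold sunion, sinter, sdiff; tauto.
- apply M_inter; auto.
- apply M_diff; auto.
- unfold sinter, sdiff; tauto.
Qed.

Lemma signed_measure_ae_eq A B : M E A -> M E B ->
  N E (sdiff A B) -> N E (sdiff B A) -> lam A = lam B.
Proof.
intros HA HB HAB HBA.
rewrite (signed_measure_split A B HA HB), (signed_measure_split B A HB HA),
  (signed_measure_null _ HAB), (signed_measure_null _ HBA).
replace (sinter B A) with (sinter A B); [reflexivity|].
apply sset_ext; unfold sinter; tauto.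
Qed.

Lemma signed_measure_ae_eq_sub A B : M E A -> M E B -> ssubset B A ->
  N E (sdiff A B) -> lam A = lam B.
Proof.
intros HA HB HBA HAB. apply signed_measure_ae_eq; auto.
apply (N_subset E N0). intros x [h1 h2]. exact (h2 (HBA x h1)).
Qed.

Lemma signed_measure_prefix_union (e : nat -> sset Y) : (forall n, M E (e n)) ->
  pairwise_disjoint e -> forall n, sum_n (fun j => lam (e j)) n = lam (prefix_union e n).
Proof.
intros He Hd n. induction n as [|n IH].
- rewrite sum_O. f_equal. apply sset_ext; intros y; unfold prefix_union; split.
  + intros hy; exists 0%nat; auto.
  + intros [j [hj hy]]. replace j with 0%nat in hy by lia. exact hy.
- rewrite sum_Sn, IH. change (lam (prefix_union e n) + lam (e (S n)) = lam (prefix_union e (S n))).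
  rewrite <- signed_measure_union; auto.
  + f_equal. apply sset_ext; intros y; unfold sunion, prefix_union; split.
    * intros [[j [hj hy]]|hy]; [exists j|exists (S n)]; auto.
    * intros [j [hj hy]]. destruct (Nat.eq_dec j (S n)) as [->|hne]; [right; auto|].
      left; exists j; split; auto; lia.
  + apply (M_ext E (fun y => exists j, In j (seq 0 (S n)) /\ e j y)).
    * intros y; split; intros [j [hj hy]]; exists j; rewrite in_seq in *; split; auto; lia.
    * apply M_finite_union; auto.
  + intros y [j [hj hy]] hy'. apply (Hd j (S n) y); auto; lia.
Qed.

Lemma signed_measure_decreasing (u : nat -> sset Y) : (forall n, M E (u n)) ->
  (forall n, ssubset (u (S n)) (u n)) -> is_lim_seq (fun n => lam (u n)) (lam (sbigcap u)).
Proof.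
intros Hu Hdec.
set (s := fun n => match n with 0 => sbigcap u | S n => sdiff (u n) (u (S n)) end).
assert (Hs : is_series (fun n => lam (s n)) (lam (u 0%nat))).
{ replace (u 0%nat) with (sbigcup s).
  - apply signed_measure_bigcup.
    + intros [|n]; [apply M_bigcap; auto|apply M_diff; auto].
    + intros [|i] [|j] y hij; simpl; [tauto| | |].
      * intros hk [_ h]. exact (h (hk (S j))).
      * intros [_ h] hk. exact (h (hk (S i))).
      * intros [h1 h2] [h3 h4]. destruct (Nat.lt_total i j) as [hl|[hl|hl]].
        -- exact (h2 (decreasing_sets u Hdec (S i) j hl y h3)).
        -- apply hij; congruence.
        -- exact (h4 (decreasing_sets u Hdec (S j) i hl y h1)).
  - apply sset_ext. intros y; unfold sbigcup; split.
    + intros [[|n] hn]; simpl in hn; [apply hn|].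
      exact (decreasing_sets u Hdec 0 n (Nat.le_0_l n) y (proj1 hn)).
    + intros hy. apply NNPP; intros hn. apply hn. exists 0%nat. simpl.
      intros n. induction n as [|n IH]; auto.
      apply NNPP; intros hn'. apply hn. exists (S n). split; auto. }
assert (Hsum : forall n,
  lam (u n) = lam (sbigcap u) + lam (u 0%nat) - sum_n (fun n => lam (s n)) n).
{ induction n as [|n IH].
  - rewrite sum_O. simpl. ring.
  - rewrite sum_Sn. change (plus ?a ?b) with (a + b). simpl s.
    rewrite (signed_measure_split (u n) (u (S n))) in IH by auto.
    replace (sinter (u n) (u (S n))) with (u (S n)) in IH; [lra|].
    apply sset_ext; intros y; unfold sinter; split; [intros hy; split; auto|tauto].
    apply (Hdec n y hy). }
apply (is_lim_seq_ext (fun n => lam (sbigcap u) + lam (u 0%nat) - sum_n (fun n => lam (s n)) n)).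
{ intros n; symmetry; apply Hsum. }
replace (Finite (lam (sbigcap u)))
  with (Finite (lam (sbigcap u) + lam (u 0%nat) - lam (u 0%nat))) by (f_equal; ring).
apply is_lim_seq_minus'; [apply is_lim_seq_const|exact Hs].
Qed.

End SignedMeasure.

Lemma injective_seq_of_infinite {J} (G : J -> Prop) :
  ~ (exists L, forall j, G j -> In j L) ->
  exists a : nat -> J, (forall m, G (a m)) /\ (forall i j, a i = a j -> i = j).
Proof.
intros Hinf.
assert (Hnew : forall L : list J, exists j, G j /\ ~ In j L).
{ intros L; apply NNPP; intros hL; apply Hinf; exists L; intros j hj; apply NNPP; intros hi.
  apply hL; exists j; auto. }
destruct (choice _ Hnew) as [pick Hpick].
set (prev := nat_rect (fun _ => list J) nil (fun _ L => pick L :: L)).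
set (a := fun m => pick (prev m)).
assert (Hprev : forall m i, (i < m)%nat -> In (a i) (prev m)).
{ induction m as [|m IH]; intros i Hi; [lia|].
  change (In (a i) (pick (prev m) :: prev m)).
  destruct (Nat.eq_dec i m) as [->|h]; [left; reflexivity|right; apply IH; lia]. }
exists a. split; [intros m; apply (Hpick (prev m))|].
intros i j Hij. destruct (Nat.lt_total i j) as [h|[h|h]]; auto; exfalso.
- apply (proj2 (Hpick (prev j))). fold (a j). rewrite <- Hij. apply Hprev; auto.
- apply (proj2 (Hpick (prev i))). fold (a i). rewrite Hij. apply Hprev; auto.
Qed.

Lemma is_series_terms_small (a : nat -> R) l : is_series a l ->
  forall eps : posreal, exists n0, forall n, (n0 <= n)%nat -> Rabs (a n) < eps.
Proof.
intros H eps.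
assert (H0 := proj2 (is_lim_seq_spec a 0) (ex_series_lim_0 a (ex_intro _ l H)) eps).
destruct H0 as [n0 Hn0]. exists n0. intros n Hn. rewrite <- (Rminus_0_r (a n)). auto.
Qed.

Lemma small_inverse_below (r : R) : r <> 0 -> exists n : nat, / INR (S n) < Rabs r.
Proof.
intros H. assert (Hr : 0 < Rabs r) by (apply Rabs_pos_lt; auto).
destruct (archimed_cor1 _ Hr) as [n0 [h1 h2]].
exists (pred n0). replace (S (pred n0)) with n0 by lia. exact h1.
Qed.

Lemma null_sigma_finite {Y} (E : ems Y) Z : N E Z -> sigma_finite_set E Z.
Proof.
intros HZ. split; [apply N_sub_M, HZ|]. exists (fun _ => 0%C). split; [|split].
- reflexivity.
- intros A _ _.
  assert (H0 := @is_series_eventually_zero C_AbsRing C_NormedModule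
    (fun _ : nat => RtoC 0) 0 (fun _ _ => eq_refl)).
  rewrite sum_O in H0. exact H0.
- intros B _ HB _. exact (N_subset E HZ HB).
Qed.

Section FaithfulMeasure.
Context {Y : Type} (E : ems Y) (P : sset Y) (mu : sset Y -> C)
  (Hmu : faithful_finite_measure_on E P mu) (HP : M E P).

Lemma faithful_measure_component (p : C -> R) V : C_component p -> M E V -> ssubset V P ->
  signed_measure E (fun B => p (mu (sinter V B))).
Proof.
intros Hp HV HVP. destruct Hmu as [Hnull [Hadd _]]. split.
- intros A HA. rewrite Hnull.
  + destruct Hp; subst p; reflexivity.
  + apply (N_subset E HA). intros x [_ h]; exact h.
  + intros x [h _]; auto.
- intros A HA Hd.
  replace (sinter V (sbigcup A)) with (sbigcup (fun n => sinter V (A n))).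
  + apply (is_series_component p (fun n => mu (sinter V (A n)))); auto. apply Hadd.
    * intros n; split; [apply M_inter; auto|]. intros x [h _]; auto.
    * intros i j x Hij [_ h1] [_ h2]. exact (Hd i j x Hij h1 h2).
  + apply sset_ext; intros x; unfold sbigcup, sinter; split.
    * intros [n [h1 h2]]; split; eauto.
    * intros [h1 [n h2]]; eauto.
Qed.

Lemma faithful_measure_ae_eq A B : N E sempty -> M E A -> M E B -> ssubset A P -> ssubset B P ->
  N E (sdiff A B) -> N E (sdiff B A) -> mu A = mu B.
Proof.
intros N0 HA HB HAP HBP HAB HBA.
assert (Hp : forall p, C_component p -> p (mu A) = p (mu B)).
{ intros p Hp.
  assert (HPA : sinter P A = A) by (apply sset_ext; unfold sinter; intros x; split; [tauto|auto]).
  assert (HPB : sinter P B = B) by (apply sset_ext; unfold sinter; intros x; split; [tauto|auto]).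
  assert (H := signed_measure_ae_eq E _ (faithful_measure_component p P Hp HP (fun _ h => h))
                 N0 A B HA HB HAB HBA).
  cbv beta in H. rewrite HPA, HPB in H. exact H. }
assert (h1 := Hp fst (or_introl eq_refl)). assert (h2 := Hp snd (or_intror eq_refl)).
destruct (mu A), (mu B); simpl in *; congruence.
Qed.

Lemma faithful_measure_witness S : M E S -> ssubset S P -> ~ N E S ->
  exists V, M E V /\ ssubset V S /\ mu V <> 0%C.
Proof.
intros HS HSP HnS. apply NNPP; intros hn. apply HnS. apply (proj2 (proj2 Hmu)); auto.
intros B HB HBS. apply NNPP; intros hne. apply hn. exists B. auto.
Qed.

Lemma faithful_signed_measure_nonzero S : M E S -> ssubset S P -> ~ N E S ->
  exists lam, signed_measure E lam /\ lam S <> 0.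
Proof.
intros HS HSP HnS.
destruct (faithful_measure_witness S HS HSP HnS) as [V [HV [HVS HV0]]].
destruct (C_component_nonzero _ HV0) as [p [Hp Hp0]].
exists (fun B => p (mu (sinter V B))). split.
- apply faithful_measure_component; auto. intros y hy; apply HSP, HVS, hy.
- replace (sinter V S) with V; auto.
  apply sset_ext; intros y; unfold sinter; split; [intros hy; split; auto|tauto].
Qed.

Lemma faithful_measure_few_large {J} (B : J -> sset Y) :
  (forall j, M E (B j) /\ ssubset (B j) P) -> (forall i j x, B i x -> B j x -> i = j) ->
  forall eps : posreal, exists L,
    forall j, (exists p, C_component p /\ eps < Rabs (p (mu (B j)))) -> In j L.
Proof.
intros HB HBd eps. apply NNPP; intros Hinf.
destruct (injective_seq_of_infinite _ Hinf) as [a [Ha Hinj]].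
assert (Hs : is_series (fun m => mu (B (a m))) (mu (sbigcup (fun m => B (a m))))).
{ apply (proj1 (proj2 Hmu)); [intros m; apply HB|].
  intros i j x Hij hi hj. exact (Hij (Hinj _ _ (HBd _ _ x hi hj))). }
destruct (is_series_terms_small _ _ (is_series_component fst _ _ (or_introl eq_refl) Hs) eps)
  as [n1 Hn1].
destruct (is_series_terms_small _ _ (is_series_component snd _ _ (or_intror eq_refl) Hs) eps)
  as [n2 Hn2].
destruct (Ha (Nat.max n1 n2)) as [p [[->| ->] Hp]].
- exact (Rlt_asym _ _ Hp (Hn1 _ (Nat.le_max_l n1 n2))).
- exact (Rlt_asym _ _ Hp (Hn2 _ (Nat.le_max_r n1 n2))).
Qed.

Lemma faithful_measure_ccc {J} (Q : J -> sset Y) : (forall j, M E (Q j)) ->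
  (forall i j x, Q i x -> Q j x -> i = j) ->
  exists l : nat -> list J, forall j, ~ N E (sinter P (Q j)) -> exists n, In j (l n).
Proof.
intros HQ HQd.
assert (HB : forall j, exists B, M E B /\ ssubset B (sinter P (Q j)) /\
                          (~ N E (sinter P (Q j)) -> mu B <> 0%C)).
{ intros j. destruct (classic (N E (sinter P (Q j)))) as [h|h].
  - exists sempty. split; [apply M_empty|split; [intros x []|tauto]].
  - destruct (faithful_measure_witness (sinter P (Q j))) as [B [h1 [h2 h3]]]; auto.
    + apply M_inter; auto.
    + intros x [h' _]; exact h'.
    + exists B; auto. }
destruct (choice _ HB) as [B HBj].
assert (Hlarge : forall n : nat, exists L, forall j,
          (exists p, C_component p /\ / INR (S n) < Rabs (p (mu (B j)))) -> In j L).
{ intros n. assert (Hpos : 0 < / INR (S n)) by (apply Rinv_0_lt_compat, lt_0_INR; lia).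
  apply (faithful_measure_few_large B) with (eps := mkposreal _ Hpos).
  - intros j. destruct (HBj j) as [h1 [h2 _]]. split; [exact h1|intros x hx; apply (h2 x hx)].
  - intros i j x hi hj. apply (HQd i j x); [apply (HBj i)|apply (HBj j)]; auto. }
destruct (choice _ Hlarge) as [l Hl].
exists l. intros j Hj.
destruct (C_component_nonzero _ (proj2 (proj2 (HBj j)) Hj)) as [p [Hp Hp0]].
destruct (small_inverse_below _ Hp0) as [n Hn].
exists n. apply Hl. exists p; auto.
Qed.

End FaithfulMeasure.

Lemma zorn_subset_maximal {T : Type} (Pr : sset T -> Prop) :
  (forall Ch : sset T -> Prop, (forall A, Ch A -> Pr A) ->
     (forall A B, Ch A -> Ch B -> ssubset A B \/ ssubset B A) ->
     Pr (fun x => exists A, Ch A /\ A x)) ->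
  exists A, Pr A /\ forall B, ssubset A B -> Pr B -> ssubset B A.
Proof.
intros H.
destruct (@classical_sets.Zorn_bigcup T Pr) as [A [HA Hmax]].
- intros Ch HCh Htot.
  replace (classical_sets.bigcup Ch (fun X => X)) with (fun x => exists A, Ch A /\ A x).
  + apply H; auto.
  + apply sset_ext; intros x; split; [intros [B [HB Bx]]|intros [B HB Bx]]; exists B; auto.
- exists A. split; auto. intros B HAB HB x Bx. apply NNPP; intros Ax.
  apply (Hmax B); auto. split; [exact HAB|]. intros HBA. exact (Ax (HBA x Bx)).
Qed.

Lemma list_choice {A B} (Rel : A -> B -> Prop) (l : list A) :
  (forall a, In a l -> exists b, Rel a b) ->
  exists lb, (forall b, In b lb -> exists a, In a l /\ Rel a b) /\
             (forall a, In a l -> exists b, In b lb /\ Rel a b).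
Proof.
induction l as [|a l IH]; intros H.
- exists nil. split; intros ? [].
- destruct IH as [lb [h1 h2]]; [intros a' ha'; apply H; simpl; auto|].
  destruct (H a (or_introl eq_refl)) as [b hb].
  exists (b :: lb). split.
  + intros b' [<-|hb']; [exists a; simpl; auto|].
    destruct (h1 b' hb') as [a' [ha' hr]]. exists a'; simpl; auto.
  + intros a' [<-|ha']; [exists b; simpl; auto|].
    destruct (h2 a' ha') as [b' [hb' hr]]. exists b'; simpl; auto.
Qed.

Section FiniteIntersectionProperty.
Context {Y : Type}.

Lemma fip_of_refinement (F F' : sset Y -> Prop) : finite_inter_property F ->
  (forall A, F' A -> exists B, F B /\ ssubset B A) -> finite_inter_property F'.
Proof.
intros HF H l hl.
destruct (list_choice (fun A B => F B /\ ssubset B A) l) as [lb [h1 h2]].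
{ intros A hA; apply H, hl, hA. }
destruct (HF lb) as [x hx].
{ intros B hB. destruct (h1 B hB) as [A [_ [HB _]]]; exact HB. }
exists x. intros A hA. destruct (h2 A hA) as [B [hB [_ hBA]]]. apply hBA, hx, hB.
Qed.

Lemma fip_sub (F F' : sset Y -> Prop) : finite_inter_property F ->
  (forall A, F' A -> F A) -> finite_inter_property F'.
Proof.
intros HF H. apply (fip_of_refinement F); auto.
intros A HA. exists A. split; [auto|intros y hy; exact hy].
Qed.

Lemma not_fip_adjoin (G : sset Y -> Prop) A :
  ~ finite_inter_property (fun B => G B \/ B = A) ->
  exists L, (forall B, In B L -> G B) /\ forall x, A x -> (forall B, In B L -> B x) -> False.
Proof.
intros Hn. apply NNPP; intros Hno. apply Hn. intros l hl.
set (inG := fun B => if excluded_middle_informative (G B) then true else false).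
apply NNPP; intros Hx. apply Hno. exists (filter inG l). split.
- intros B HB. apply filter_In in HB. unfold inG in HB.
  destruct (excluded_middle_informative (G B)); [auto|].
  destruct HB as [_ HB]; discriminate.
- intros x Ax Hall. apply Hx. exists x. intros B HB.
  destruct (hl B HB) as [HGB| ->]; [|exact Ax].
  apply Hall, filter_In. split; auto. unfold inG.
  destruct (excluded_middle_informative (G B)); auto.
Qed.

Lemma chain_list_upper_bound (Ch : (sset Y -> Prop) -> Prop) (F : sset Y -> Prop) :
  (forall A B, Ch A -> Ch B -> ssubset A B \/ ssubset B A) ->
  forall l, (forall a, In a l -> F a \/ exists G, Ch G /\ G a) ->
  exists G0, (Ch G0 \/ forall a, ~ G0 a) /\ forall a, In a l -> F a \/ G0 a.
Proof.
intros Htot l. induction l as [|A l IH]; intros hl.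
- exists (fun _ => False). split; [right; auto|intros A []].
- destruct IH as [G0 [h0 h1]]; [intros B hB; apply hl; simpl; auto|].
  destruct (hl A (or_introl eq_refl)) as [hA|[G [hG hGA]]].
  + exists G0. split; auto. intros B [<-|hB]; auto.
  + destruct h0 as [h0|h0].
    * destruct (Htot G G0 hG h0) as [s|s].
      -- exists G0. split; auto. intros B [<-|hB]; auto.
      -- exists G. split; auto. intros B [<-|hB]; auto.
         destruct (h1 B hB); auto.
    * exists G. split; auto. intros B [<-|hB]; auto.
      destruct (h1 B hB) as [h|h]; auto. destruct (h0 _ h).
Qed.

Lemma fip_maximal_extension (C F : sset Y -> Prop) :
  (forall A, F A -> C A) -> finite_inter_property F ->
  exists G, (forall A, F A -> G A) /\ finite_inter_property G /\
    (forall A, C A -> finite_inter_property (fun B => G B \/ B = A) -> G A).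
Proof.
intros HFC HF.
set (Pr := fun H : sset Y -> Prop =>
  (forall A, H A -> C A) /\ finite_inter_property (fun A => F A \/ H A)).
destruct (zorn_subset_maximal Pr) as [H [[HC Hfip] Hmax]].
- intros Ch HCh Htot. split.
  + intros A [G [hG hA]]. exact (proj1 (HCh G hG) A hA).
  + intros l hl. destruct (chain_list_upper_bound Ch F Htot l) as [G0 [h0 h1]].
    { intros A hA. destruct (hl A hA) as [h|[G [hG hGA]]]; eauto. }
    assert (HG0 : finite_inter_property (fun A => F A \/ G0 A)).
    { destruct h0 as [h0|h0]; [apply HCh, h0|].
      apply (fip_sub F); auto. intros A [h|h]; [exact h|destruct (h0 _ h)]. }
    exact (HG0 l h1).
- exists (fun A => F A \/ H A). split; [auto|split; [exact Hfip|]].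
  intros A HA HfipA. right. apply (Hmax (fun B => H B \/ B = A)).
  + intros B hB; auto.
  + split.
    * intros B [hB| ->]; auto.
    * apply (fip_sub _ _ HfipA). intros B [hB|[hB|hB]]; auto.
  + right; reflexivity.
Qed.

Lemma maximal_fip_union_member (G : sset Y -> Prop) U l : finite_inter_property G ->
  (forall k, In k l -> finite_inter_property (fun B => G B \/ B = k) -> G k) ->
  G U -> (forall y, U y <-> exists k, In k l /\ k y) -> exists k, In k l /\ G k.
Proof.
intros HG Hmax HU HUl. apply NNPP; intros Hno.
destruct (list_choice (fun k L => (forall B, In B L -> G B) /\
           forall x, k x -> (forall B, In B L -> B x) -> False) l) as [lL [h1 h2]].
{ intros k hk. apply not_fip_adjoin. intros hf. apply Hno. exists k; auto. }
destruct (HG (U :: concat lL)) as [x hx].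
{ intros B [<-|hB]; [exact HU|]. apply in_concat in hB. destruct hB as [L [hL hBL]].
  destruct (h1 L hL) as [k [_ [hG _]]]. auto. }
destruct (proj1 (HUl x) (hx U (or_introl eq_refl))) as [k [hk hkx]].
destruct (h2 k hk) as [L [hL [_ hempty]]].
apply (hempty x hkx). intros B hB. apply hx. right. apply in_concat. exists L; auto.
Qed.

End FiniteIntersectionProperty.

Definition with_empty {Y} (K : sset Y -> Prop) (k : sset Y) : Prop := K k \/ forall y, ~ k y.

Definition finite_unions {Y} (K : sset Y -> Prop) (u : sset Y) : Prop :=
  exists l : list (sset Y), (forall k, In k l -> K k) /\
    (forall y, u y <-> exists k, In k l /\ k y).

Definition countable_inters {Y} (K : sset Y -> Prop) (w : sset Y) : Prop :=
  exists u : nat -> sset Y, (forall n, K (u n)) /\ (forall y, w y <-> forall n, u n y).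

Section CompactClasses.
Context {Y : Type} (K : sset Y -> Prop) (HK : compact_class K).

Lemma compact_class_with_empty : compact_class (with_empty K).
Proof.
intros F HF HF0 Hfip. apply HK; auto.
intros A HA. destruct (HF A HA) as [h|h]; auto.
destruct (Hfip (A :: nil)) as [x hx]; [intros B [<-|[]]; auto|].
destruct (h x (hx A (or_introl eq_refl))).
Qed.

Lemma compact_class_finite_unions : compact_class (finite_unions K).
Proof.
intros F HF [U0 HU0] Hfip.
destruct (fip_maximal_extension (finite_unions K) F HF Hfip) as [G [HFG [HG Hmax]]].
assert (Hmember : forall U, F U -> exists l, (forall k, In k l -> K k) /\
                    (forall y, U y <-> exists k, In k l /\ k y) /\ exists k, In k l /\ G k).
{ intros U HU. destruct (HF U HU) as [l [hl hUl]]. exists l. split; [auto|split; [auto|]].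
  apply (maximal_fip_union_member G U l HG); auto.
  intros k hk. apply Hmax. exists (k :: nil). split; [intros k' [<-|[]]; auto|].
  intros y; split; [intros hy; exists k; simpl; auto|intros [k' [[<-|[]] h]]; auto]. }
destruct (HK (fun k => G k /\ K k)) as [y Hy].
- intros A [_ h]; exact h.
- destruct (Hmember U0 HU0) as [l [hl [_ [k [hk hGk]]]]]. exists k; auto.
- apply (fip_sub G); auto. intros A [h _]; exact h.
- exists y. intros U HU. destruct (Hmember U HU) as [l [hl [hUl [k [hk hGk]]]]].
  apply hUl. exists k. split; [exact hk|apply Hy; auto].
Qed.

End CompactClasses.

Lemma compact_class_countable_inters {Y} (C : sset Y -> Prop) :
  compact_class C -> compact_class (countable_inters C).
Proof.
intros HC F HF [w0 Hw0] Hfip.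
set (F' := fun u => C u /\ exists w, F w /\ ssubset w u).
destruct (HC F') as [y Hy].
- intros u [h _]; exact h.
- destruct (HF w0 Hw0) as [u [hu hw]]. exists (u 0%nat). split; auto.
  exists w0. split; auto. intros y hy. apply hw, hy.
- apply (fip_of_refinement F); auto. intros u [_ [w [hw hwu]]]. exists w; auto.
- exists y. intros w hw. destruct (HF w hw) as [u [hu hr]]. apply hr. intros n.
  apply Hy. split; auto. exists w. split; auto. intros y' hy'. apply hr; auto.
Qed.

Definition compact_hull {Y} (K : sset Y -> Prop) : sset Y -> Prop :=
  countable_inters (finite_unions (with_empty K)).

Lemma compact_class_compact_hull {Y} (K : sset Y -> Prop) :
  compact_class K -> compact_class (compact_hull K).
Proof.
intros HK. apply compact_class_countable_inters, compact_class_finite_unions,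
  compact_class_with_empty, HK.
Qed.

Section MeasurableHull.
Context {Y : Type} (E : ems Y) (K : sset Y -> Prop) (HKM : forall k, K k -> M E k).

Lemma M_with_empty k : with_empty K k -> M E k.
Proof.
intros [h|h]; auto. apply (M_ext E sempty); [|apply M_empty].
intros y; split; [intros []|intros hy; destruct (h y hy)].
Qed.

Lemma M_finite_unions u : finite_unions (with_empty K) u -> M E u.
Proof.
intros [l [hl hr]]. apply (M_ext E (fun y => exists k, In k l /\ k y)).
- intros y; rewrite hr; tauto.
- apply (M_finite_union E (fun k => k)). intros k hk. apply M_with_empty, hl, hk.
Qed.

Lemma M_compact_hull w : compact_hull K w -> M E w.
Proof.
intros [u [hu hr]]. apply (M_ext E (sbigcap u)).
- intros y; rewrite hr; tauto.
- apply M_bigcap. intros n; apply M_finite_unions, hu.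
Qed.

End MeasurableHull.

Definition disjoint_family {Y} (D : sset Y -> Prop) : Prop :=
  forall A B y, D A -> D B -> A y -> B y -> A = B.

Lemma disjointify {Y} (D : sset Y -> Prop) (d : nat -> sset Y) : disjoint_family D ->
  (forall A, D A -> exists m, d m = A) ->
  exists e : nat -> sset Y, (forall j, with_empty D (e j)) /\ pairwise_disjoint e /\
    (forall y, (exists j, e j y) <-> exists A, D A /\ A y).
Proof.
intros HD Hd.
set (fresh := fun m => D (d m) /\ forall m', (m' < m)%nat -> d m' <> d m).
exists (fun m y => fresh m /\ d m y). split; [|split].
- intros j. destruct (classic (fresh j)) as [h|h].
  + left. replace (fun y => fresh j /\ d j y) with (d j); [apply h|].
    apply sset_ext; intros y; tauto.
  + right. intros y [hy _]; exact (h hy).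
- intros i j y hij [[hi hi'] hiy] [[hj hj'] hjy]. assert (hq := HD _ _ y hi hj hiy hjy).
  destruct (Nat.lt_total i j) as [h|[h|h]]; [exact (hj' i h hq)|exact (hij h)|].
  exact (hi' j h (eq_sym hq)).
- intros y; split; [intros [j [[hj _] hy]]; exists (d j); auto|].
  intros [A [HA Ay]]. destruct (Hd A HA) as [m <-].
  induction m as [m IH] using lt_wf_ind.
  destruct (classic (forall m', (m' < m)%nat -> d m' <> d m)) as [h|h].
  + exists m. repeat split; auto.
  + apply not_all_ex_not in h. destruct h as [m' hm'].
    apply imply_to_and in hm'. destruct hm' as [hlt hne]. apply NNPP in hne.
    apply (IH m' hlt); rewrite hne; auto.
Qed.

Lemma dependent_choice_nat {A} (Inv : nat -> A -> Prop) (Step : nat -> A -> A -> Prop) a0 :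
  Inv 0%nat a0 -> (forall n a, Inv n a -> exists a', Inv (S n) a' /\ Step n a a') ->
  exists u : nat -> A, (forall n, Inv n (u n)) /\ (forall n, Step n (u n) (u (S n))).
Proof.
intros H0 HS.
assert (Hc : forall p : nat * A, exists a',
           Inv (fst p) (snd p) -> Inv (S (fst p)) a' /\ Step (fst p) (snd p) a').
{ intros [n a]. destruct (classic (Inv n a)) as [h|h].
  - destruct (HS n a h) as [a' ha']. exists a'; auto.
  - exists a; tauto. }
destruct (choice _ Hc) as [next Hnext].
set (u := fix u n := match n with 0%nat => a0 | S n => next (n, u n) end).
assert (Hu : forall n, Inv n (u n)).
{ induction n as [|n IH]; [exact H0|]. apply (Hnext (n, u n)), IH. }
exists u. split; auto. intros n. apply (Hnext (n, u n)), Hu.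
Qed.

Lemma Rabs_halving_step a b c r : Rabs (a - b) < r / 2 -> Rabs (b - c) < Rabs c / 2 - r ->
  Rabs (a - c) < Rabs c / 2 - r / 2.
Proof.
intros h1 h2. replace (a - c) with ((a - b) + (b - c)) by ring.
eapply Rle_lt_trans; [apply Rabs_triang|]. lra.
Qed.

Lemma is_lim_seq_near_nonzero (x : nat -> R) (l c : R) :
  (forall n, Rabs (x n - c) < Rabs c / 2) -> is_lim_seq x l -> l <> 0.
Proof.
intros Hx Hl ->.
assert (Hc : 0 < Rabs c / 2) by (apply (Rle_lt_trans _ _ _ (Rabs_pos _) (Hx 0%nat))).
destruct (proj2 (is_lim_seq_spec _ _) Hl (mkposreal _ Hc)) as [n Hn].
assert (Hsmall := Hn n (le_n n)). cbn [pos] in Hsmall. rewrite Rminus_0_r in Hsmall.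
assert (Habs := Rabs_triang (x n) (c - x n)).
replace (x n + (c - x n)) with c in Habs by ring.
rewrite Rabs_minus_sym in Habs. specialize (Hx n). lra.
Qed.

Lemma pre_Some {A B} (f : A -> option B) S x y : f x = Some y -> pre f S x -> S y.
Proof. intros Hx [y' [Hy' HS]]. rewrite Hx in Hy'. injection Hy' as ->. exact HS. Qed.

Lemma pre_sbigcap_nested {A} (h : A -> option A) (u : nat -> sset A) :
  (forall n, ssubset (u (S n)) (pre h (u n))) -> forall y, sbigcap u y -> pre h (sbigcap u) y.
Proof.
intros Hu y hy. destruct (Hu 0%nat y (hy 1%nat)) as [z [hz _]].
exists z. split; [exact hz|]. intros n. exact (pre_Some h _ y z hz (Hu n y (hy (S n)))).
Qed.

Section InnerApproximation.
Context {Y : Type} (E : ems Y) (K : sset Y -> Prop) (HKM : forall k, K k -> M E k)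
  (HKd : forall m, M E m -> ~ N E m -> exists k, K k /\ ~ N E k /\ ssubset k m)
  (N0 : N E sempty) (P : sset Y) (mu : sset Y -> C)
  (Hmu : faithful_finite_measure_on E P mu) (HP : M E P).

Lemma disjoint_family_enumerable (D : sset Y -> Prop) : disjoint_family D ->
  (forall A, D A -> M E A /\ ~ N E A /\ ssubset A P) ->
  exists d : nat -> sset Y, forall A, D A -> exists m, d m = A.
Proof.
intros HD HDA.
destruct (faithful_measure_ccc E P mu Hmu HP (fun A y => D A /\ A y)) as [l Hl].
- intros A. destruct (classic (D A)) as [h|h].
  + apply (M_ext E A); [intros y; tauto|apply HDA, h].
  + apply (M_ext E sempty); [intros y; unfold sempty; tauto|apply M_empty].
- intros A B y [hA hAy] [hB hBy]. exact (HD A B y hA hB hAy hBy).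
- exists (fun m => let p := Cantor.of_nat m in nth (snd p) (l (fst p)) sempty).
  intros A hA. destruct (Hl A) as [n hn].
  + destruct (HDA A hA) as [_ [hN hAP]]. intros hPA. apply hN.
    apply (N_ext E (sinter P (fun y => D A /\ A y))); auto.
    intros y; unfold sinter; split; [tauto|intros hy; repeat split; auto].
  + destruct (In_nth _ _ sempty hn) as [k [_ hk]].
    exists (Cantor.to_nat (n, k)). rewrite Cantor.cancel_of_to. exact hk.
Qed.

Lemma exhaustion T : M E T -> ssubset T P -> exists e : nat -> sset Y,
  (forall j, with_empty K (e j)) /\ (forall j, ssubset (e j) T) /\ pairwise_disjoint e /\
  N E (sdiff T (sbigcup e)).
Proof.
intros HT HTP.
set (admissible := fun D : sset Y -> Prop =>
       (forall A, D A -> K A /\ ~ N E A /\ ssubset A T) /\ disjoint_family D).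
destruct (zorn_subset_maximal admissible) as [D [[HDK HDd] Hmax]].
{ intros Ch HCh Htot. split.
  - intros A [G [hG hA]]. exact (proj1 (HCh G hG) A hA).
  - intros A B y [G1 [hG1 hA]] [G2 [hG2 hB]].
    destruct (Htot G1 G2 hG1 hG2) as [s|s].
    + exact (proj2 (HCh G2 hG2) A B y (s A hA) hB).
    + exact (proj2 (HCh G1 hG1) A B y hA (s B hB)). }
destruct (disjoint_family_enumerable D HDd) as [d Hd].
{ intros A hA. destruct (HDK A hA) as [hK [hN hT]].
  split; [auto|split; [auto|intros y hy; apply HTP, hT, hy]]. }
destruct (disjointify D d HDd Hd) as [e [He [Hdisj Hcov]]].
assert (HeT : forall j, ssubset (e j) T).
{ intros j y hy. destruct (proj1 (Hcov y) (ex_intro _ j hy)) as [A [hA hAy]].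
  apply (HDK A hA); auto. }
assert (HeK : forall j, with_empty K (e j)).
{ intros j. destruct (He j) as [h|h]; [left; apply HDK, h|right; exact h]. }
exists e. split; [exact HeK|split; [exact HeT|split; [exact Hdisj|]]].
apply NNPP. intros Hrest.
destruct (HKd (sdiff T (sbigcup e))) as [k [hk [hkN hkT]]]; auto.
{ apply M_diff; auto. apply M_bigcup. intros j. apply (M_with_empty E K HKM), HeK. }
assert (Hkout : forall A y, D A -> A y -> ~ k y).
{ intros A y hA hAy hky. apply (proj2 (hkT y hky)).
  apply (proj2 (Hcov y)). exists A; auto. }
assert (HkD : D k).
{ apply (Hmax (fun A => D A \/ A = k)); [intros A hA; auto| |right; reflexivity].
  split.
  - intros A [hA| ->]; [apply HDK, hA|]. repeat split; auto. intros y hy; apply (hkT y hy).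
  - intros A B y [hA| ->] [hB| ->] hAy hBy; auto.
    + exact (HDd A B y hA hB hAy hBy).
    + destruct (Hkout A y hA hAy hBy).
    + destruct (Hkout B y hB hBy hAy). }
apply hkN. apply (N_subset E N0). intros y hy. exact (Hkout k y HkD hy hy).
Qed.

Section WithSignedMeasure.
Context (lam : sset Y -> R) (Hlam : signed_measure E lam).

Lemma inner_approximation T (eps : posreal) : M E T -> ssubset T P ->
  exists u, finite_unions (with_empty K) u /\ ssubset u T /\ Rabs (lam T - lam u) < eps.
Proof.
intros HT HTP.
destruct (exhaustion T HT HTP) as [e [HeK [HeT [Hdisj Hrest]]]].
assert (HeM : forall j, M E (e j)) by (intros j; apply (M_with_empty E K HKM), HeK).
assert (HTe : lam T = lam (sbigcup e)).
{ apply (signed_measure_ae_eq_sub E lam Hlam N0); auto; [apply M_bigcup; auto|].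
  intros y [j hj]. apply (HeT j y hj). }
destruct (is_series_partial_sums _ _ (signed_measure_bigcup E lam Hlam e HeM Hdisj) eps)
  as [n Hn].
exists (prefix_union e n). split; [|split].
- exists (map e (seq 0 (S n))). split.
  + intros k hk. apply in_map_iff in hk. destruct hk as [j [<- _]]. apply HeK.
  + intros y. unfold prefix_union. split.
    * intros [j [h1 h2]]. exists (e j). split; auto. apply in_map_iff. exists j.
      split; auto. apply in_seq; lia.
    * intros [k [hk hy]]. apply in_map_iff in hk. destruct hk as [j [<- hj]].
      apply in_seq in hj. exists j. split; auto. lia.
- intros y [j [_ h]]. apply (HeT j y h).
- rewrite HTe, <- (signed_measure_prefix_union E lam Hlam N0 e HeM Hdisj n), Rabs_minus_sym.
  apply Hn; auto.
Qed.

Context (h : Y -> option Y) (hM : forall B, M E B -> M E (pre h B))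
  (hN : forall B, M E B -> N E (sdiff B (pre h B))).

Lemma invariant_step u (eps : posreal) : M E u -> ssubset u P ->
  exists u', finite_unions (with_empty K) u' /\ ssubset u' (sinter u (pre h u)) /\
    Rabs (lam u - lam u') < eps.
Proof.
intros Hu HuP.
replace (lam u) with (lam (sinter u (pre h u))).
- apply inner_approximation; [apply M_inter; auto|]. intros y [hy _]; auto.
- symmetry. apply (signed_measure_ae_eq_sub E lam Hlam N0); auto.
  + apply M_inter; auto.
  + intros y [hy _]; exact hy.
  + apply (N_ext E (sdiff u (pre h u))); [|auto]. intros y; unfold sdiff, sinter; tauto.
Qed.

Lemma invariant_compact_subset T : M E T -> ssubset T P -> lam T <> 0 ->
  exists k, compact_hull K k /\ ssubset k T /\ (forall y, k y -> pre h k y) /\ lam k <> 0.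
Proof.
intros HT HTP Hc. set (c := lam T).
assert (Hc0 : 0 < Rabs c) by (apply Rabs_pos_lt; auto).
set (r := fun n => Rabs c / 2 ^ S (S n)).
assert (Hr : forall n, 0 < r n) by (intros n; apply Rdiv_lt_0_compat, pow_lt; lra).
assert (HrS : forall n, r (S n) = r n / 2).
{ intros n. unfold r. change (2 ^ S (S (S n))) with (2 * 2 ^ S (S n)).
  field. apply pow_nonzero. lra. }
set (Inv := fun n u => finite_unions (with_empty K) u /\ ssubset u T /\
                      Rabs (lam u - c) < Rabs c / 2 - r n).
destruct (inner_approximation T (mkposreal _ (Hr 0%nat)) HT HTP) as [u0 [h1 [h2 h3]]].
destruct (dependent_choice_nat Inv (fun _ u u' => ssubset u' (sinter u (pre h u))) u0)
  as [u [Hinv Hstep]].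
- split; [exact h1|split; [exact h2|]]. cbn [pos] in h3.
  assert (Hr0 : r 0%nat = Rabs c / 4) by (unfold r; simpl; field).
  rewrite Hr0 in *. rewrite Rabs_minus_sym. fold c in h3. lra.
- intros n v [hv1 [hv2 hv3]].
  assert (Hv : M E v) by (apply (M_finite_unions E K HKM), hv1).
  destruct (invariant_step v (mkposreal _ (Hr (S n))) Hv) as [u' [hu1 [hu2 hu3]]].
  { intros y hy; apply HTP, hv2, hy. }
  exists u'. split; [|exact hu2]. split; [exact hu1|split].
  + intros y hy. apply hv2, (hu2 y hy).
  + cbn [pos] in hu3. rewrite HrS in hu3 |- *. rewrite Rabs_minus_sym in hu3.
    apply (Rabs_halving_step _ (lam v)); auto.
- assert (HuM : forall n, M E (u n)) by (intros n; apply (M_finite_unions E K HKM), Hinv).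
  assert (Hdec : forall n, ssubset (u (S n)) (u n)) by (intros n y hy; apply (Hstep n y hy)).
  exists (sbigcap u). split; [|split; [|split]].
  + exists u. split; [intros n; apply Hinv|]. intros y; tauto.
  + intros y hy. apply (Hinv 0%nat), hy.
  + apply pre_sbigcap_nested. intros n y hy. apply (Hstep n y hy).
  + apply (is_lim_seq_near_nonzero (fun n => lam (u n)) _ c).
    * intros n. destruct (Hinv n) as [_ [_ Hn]]. assert (Hrn := Hr n). lra.
    * apply (signed_measure_decreasing E lam Hlam N0 u HuM Hdec).
Qed.

End WithSignedMeasure.

End InnerApproximation.

Lemma pre_pcomp {A B Z} (g : B -> option Z) (f : A -> option B) S x :
  pre (pcomp g f) S x <-> pre f (pre g S) x.
Proof.
unfold pre, pcomp. destruct (f x) as [b|]; split.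
- intros [c [h1 h2]]; exists b; split; auto; exists c; auto.
- intros [b' [h1 [c [h2 h3]]]]. injection h1 as <-. exists c; auto.
- intros [c [h _]]; discriminate.
- intros [b' [h _]]; discriminate.
Qed.

Lemma pre_pid {A} (S : sset A) x : pre pid S x <-> S x.
Proof.
unfold pre, pid. split; [intros [y [h1 h2]]; injection h1 as <-; auto|intros h; exists x; auto].
Qed.

Section AeIdentity.
Context {A : Type} (E : ems A) (h : A -> option A) (Hh : pequiv E E h pid).

Lemma ae_identity_sdiff_pre B : M E B -> N E (sdiff B (pre h B)).
Proof.
intros HB. apply (N_subset E (Hh B HB)). intros y [h1 h2]. right. split; auto. apply pre_pid; auto.
Qed.

Lemma ae_identity_pre_sdiff B : M E B -> N E (sdiff (pre h B) B).
Proof.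
intros HB. apply (N_subset E (Hh B HB)). intros y [h1 h2]. left. split; auto. rewrite pre_pid; auto.
Qed.

End AeIdentity.

Lemma null_of_null_pre {X Y} (EX : ems X) (EY : ems Y) (f : X -> option Y) (g : Y -> option X) :
  premap EX EY f -> pequiv EX EX (pcomp g f) pid ->
  forall B, M EX B -> N EY (pre g B) -> N EX B.
Proof.
intros [_ [_ fN]] Hgf B HB HgB.
apply (N_subset EX (N_union EX _ _ (fN _ HgB) (ae_identity_sdiff_pre EX _ Hgf B HB))).
intros x hx. destruct (classic (pre (pcomp g f) B x)) as [h|h].
- left. apply pre_pcomp, h.
- right. split; auto.
Qed.

Lemma compact_class_sub {X} (K K' : sset X -> Prop) :
  compact_class K -> (forall A, K' A -> K A) -> compact_class K'.
Proof. intros HK HK' F HF. apply HK. intros A HA; apply HK', HF, HA. Qed.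

(* [A] and [k] correspond exactly under [f] and [g], so [g] maps a point common to the [k]'s
   into every [A]. *)
Definition transported_class {X Y} (f : X -> option Y) (g : Y -> option X)
  (K : sset Y -> Prop) (A : sset X) : Prop :=
  exists k, K k /\ (forall y, k y -> pre g A y) /\ (forall x, A x -> pre f k x).

Lemma compact_class_transport {X Y} (f : X -> option Y) (g : Y -> option X) K :
  compact_class K -> compact_class (transported_class f g K).
Proof.
intros HK F HF [A0 HA0] Hfip.
set (F' := fun k => K k /\ exists A, F A /\ (forall y, k y -> pre g A y) /\
                                     (forall x, A x -> pre f k x)).
destruct (HF A0 HA0) as [k0 [hk0 [hk0g hk0f]]].
destruct (HK F') as [y Hy].
- intros k [h _]; exact h.
- exists k0. split; auto. exists A0; auto.
- intros l hl.
  destruct (list_choice (fun k A => F A /\ forall x, A x -> pre f k x) l) as [lA [h1 h2]].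
  { intros k hk. destruct (hl k hk) as [_ [A [hA [_ hAk]]]]. exists A; auto. }
  destruct (Hfip (A0 :: lA)) as [x hx].
  { intros A [<-|hA]; [exact HA0|]. destruct (h1 A hA) as [k [_ [hFA _]]]; exact hFA. }
  destruct (hk0f x (hx A0 (or_introl eq_refl))) as [y0 [hy0 _]].
  exists y0. intros k hk. destruct (h2 k hk) as [A [hA [_ hAk]]].
  apply (pre_Some f k x y0 hy0), hAk, hx. right; exact hA.
- destruct (hk0g y (Hy k0 (conj hk0 (ex_intro _ A0 (conj HA0 (conj hk0g hk0f))))))
    as [x0 [hx0 _]].
  exists x0. intros A hA. destruct (HF A hA) as [k [hk [hkg hkf]]].
  apply (pre_Some g A y x0 hx0), hkg, Hy. split; auto. exists A; auto.
Qed.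

Lemma locally_determined_partition {X J} (E : ems X) (Q : J -> sset X) :
  locally_determined E -> N E sempty -> (forall j, M E (Q j)) ->
  (forall F, sigma_finite_set E F -> exists l : nat -> list J,
     N E (sdiff F (fun x => exists n j, In j (l n) /\ Q j x))) ->
  (forall A, M E A <-> forall j, M E (sinter A (Q j))) /\
  (forall A, N E A <-> forall j, N E (sinter A (Q j))).
Proof.
intros LD N0 HQ Hcov. split; intros A; split.
- intros HA j. apply M_inter; auto.
- intros HA. apply (proj1 (LD A)). intros F HF.
  destruct (Hcov F HF) as [l Hrest]. destruct HF as [HFM _].
  apply (M_ext E (sunion (sbigcup (fun n x => exists j, In j (l n) /\ sinter A (Q j) x /\ F x))
                         (sinter A (sdiff F (fun x => exists n j, In j (l n) /\ Q j x))))).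
  + intros x; unfold sunion, sbigcup, sinter, sdiff; split.
    * intros [[n [j [_ [[h1 _] h2]]]]|[h1 [h2 _]]]; auto.
    * intros [h1 h2]. destruct (classic (exists n j, In j (l n) /\ Q j x)) as [[n [j [hj hq]]]|hn].
      -- left. exists n, j. auto.
      -- right. auto.
  + apply M_union.
    * apply M_bigcup. intros n. apply M_finite_union. intros j _. apply M_inter; auto.
    * apply N_sub_M. apply (N_subset E Hrest). intros x [_ h]; exact h.
- intros HA j. apply (N_subset E HA). intros x [h _]; exact h.
- intros HA. apply (proj2 (LD A)). intros F HF.
  destruct (Hcov F HF) as [l Hrest].
  apply (N_subset E (N_union E _ _
           (N_bigcup E (fun n x => exists j, In j (l n) /\ sinter A (Q j) x)
              (fun n => N_finite_union E _ _ N0 (fun j _ => HA j))) Hrest)).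
  intros x [h1 h2]. destruct (classic (exists n j, In j (l n) /\ Q j x)) as [[n [j [hj hq]]]|hn].
  + left. exists n, j. split; auto. split; auto.
  + right. split; auto.
Qed.

Section Isomorphism.
Context {X Y : Type} (EX : ems X) (EY : ems Y) (f : X -> option Y) (g : Y -> option X)
  (Hf : premap EX EY f) (Hg : premap EY EX g)
  (Hgf : pequiv EX EX (pcomp g f) pid) (Hfg : pequiv EY EY (pcomp f g) pid).

Let fM := proj1 (proj2 Hf).
Let fN := proj2 (proj2 Hf).
Let gM := proj1 (proj2 Hg).
Let gN := proj2 (proj2 Hg).

Lemma N0X : N EX sempty.
Proof. apply (N_subset EX (proj1 Hf)). intros x []. Qed.

Lemma N0Y : N EY sempty.
Proof. apply (N_subset EY (proj1 Hg)). intros x []. Qed.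

Lemma M_pre_fg B : M EY B -> M EY (pre (pcomp f g) B).
Proof.
intros HB. apply (M_ext EY (pre g (pre f B))); [intros y; rewrite pre_pcomp; tauto|].
apply gM, fM, HB.
Qed.

Lemma strictly_localizable_invariant_subset (K : sset Y -> Prop) :
  (forall k, K k -> M EY k) ->
  (forall m, M EY m -> ~ N EY m -> exists k, K k /\ ~ N EY k /\ ssubset k m) ->
  strictly_localizable EY -> forall S, M EY S -> ~ N EY S ->
  exists k, compact_hull K k /\ ssubset k S /\ (forall y, k y -> pre (pcomp f g) k y) /\
    ~ N EY k.
Proof.
intros HKM HKd [I [P [PM [_ [_ [Psf [_ PNc]]]]]]] S HS HnS.
assert (Hi : exists i, ~ N EY (sinter S (P i))).
{ apply NNPP; intros hn. apply HnS, PNc. intros i. apply NNPP; intros h. apply hn; eauto. }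
destruct Hi as [i Hi]. destruct (Psf i) as [_ [mu Hmu]].
assert (HSi : M EY (sinter S (P i))) by (apply M_inter; auto).
assert (HSiP : ssubset (sinter S (P i)) (P i)) by (intros y [_ h]; exact h).
destruct (faithful_signed_measure_nonzero EY (P i) mu Hmu _ HSi HSiP Hi) as [lam [Hlam Hlam0]].
destruct (invariant_compact_subset EY K HKM HKd N0Y (P i) mu Hmu (PM i) lam Hlam
            (pcomp f g) M_pre_fg (ae_identity_sdiff_pre EY _ Hfg) _ HSi HSiP Hlam0)
  as [k [hk [hkS [hkinv hk0]]]].
exists k. split; [exact hk|split; [intros y hy; apply (hkS y hy)|split; [exact hkinv|]]].
intros hN. apply hk0, (signed_measure_null EY lam Hlam _ hN).
Qed.

Lemma compact_transport : ems_compact EY -> strictly_localizable EY -> ems_compact EX.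
Proof.
intros [K [HKc [HKM HKd]]] HSL.
exists (fun A => M EX A /\ transported_class f g (compact_hull K) A). split; [|split].
- apply (compact_class_sub (transported_class f g (compact_hull K))).
  + apply compact_class_transport, compact_class_compact_hull, HKc.
  + intros A [_ h]; exact h.
- intros A [h _]; exact h.
- intros m Hm Hnm.
  assert (HS : M EY (pre g m)) by (apply gM, Hm).
  assert (HnS : ~ N EY (pre g m)).
  { intros h. apply Hnm, (null_of_null_pre EX EY f g Hf Hgf m Hm h). }
  destruct (strictly_localizable_invariant_subset K HKM HKd HSL _ HS HnS)
    as [k [hk [hkS [hkinv hkN]]]].
  assert (HkM : M EY k) by (apply (M_compact_hull EY K HKM), hk).
  set (A := sinter (pre f k) m).
  assert (HkA : forall y, k y -> pre g A y).
  { intros y hy. destruct (hkS y hy) as [x [hx hmx]].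
    exists x. split; [exact hx|split; [|exact hmx]].
    exact (pre_Some g _ y x hx (proj1 (pre_pcomp f g k y) (hkinv y hy))). }
  exists A. split; [split|split].
  + apply M_inter; auto.
  + exists k. split; [exact hk|split; [exact HkA|]]. intros x [hx _]; exact hx.
  + intros hN. apply hkN. apply (N_subset EY (gN _ hN)). exact HkA.
  + intros x [_ hx]; exact hx.
Qed.

Lemma pre_roundtrip_ae C' B : M EY C' -> ssubset C' (pre g B) ->
  N EY (sdiff C' (pre g (sinter (pre f C') B))) /\ N EY (sdiff (pre g (sinter (pre f C') B)) C').
Proof.
intros HC' HC'B. split.
- apply (N_subset EY (ae_identity_sdiff_pre EY _ Hfg C' HC')).
  intros y [hy hn]. split; [exact hy|]. intros h. apply hn.
  destruct (HC'B y hy) as [x [hx hBx]]. exists x. split; [exact hx|split; [|exact hBx]].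
  apply (pre_Some g _ y x hx), pre_pcomp, h.
- apply (N_subset EY (ae_identity_pre_sdiff EY _ Hfg C' HC')).
  intros y [[x [hx [hfx _]]] hy]. split; [|exact hy].
  apply pre_pcomp. exists x. auto.
Qed.

Lemma sigma_finite_pre P : sigma_finite_set EY P -> sigma_finite_set EX (pre f P).
Proof.
intros [HP [mu [Hnull [Hadd Hfaith]]]]. split; [apply fM, HP|].
exists (fun A => mu (sinter (pre g A) P)). split; [|split].
- intros A HA _. apply Hnull; [|intros y [_ h]; exact h].
  apply (N_subset EY (gN _ HA)). intros y [h _]; exact h.
- intros A HA Hd.
  replace (sinter (pre g (sbigcup A)) P) with (sbigcup (fun n => sinter (pre g (A n)) P)).
  + apply Hadd.
    * intros n. split; [apply M_inter; auto; apply gM, (HA n)|intros y [_ h]; exact h].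
    * intros a b y hab [[x1 [h1 h2]] _] [[x2 [h3 h4]] _]. rewrite h1 in h3. injection h3 as <-.
      exact (Hd a b x1 hab h2 h4).
  + apply sset_ext. intros y; unfold sbigcup, sinter, pre; split.
    * intros [n [[x [h1 h2]] h3]]. split; auto. exists x; split; auto. exists n; auto.
    * intros [[x [h1 [n h2]]] h3]. exists n. split; auto. exists x; auto.
- intros B HB HBP Hz.
  set (C := sinter (pre g B) P).
  assert (HCM : M EY C) by (apply M_inter; auto).
  assert (HCN : N EY C).
  { apply Hfaith; [exact HCM|intros y [_ h]; exact h|]. intros C' HC' HC'C.
    assert (HC'B : ssubset C' (pre g B)) by (intros y hy; apply (HC'C y hy)).
    assert (HB' : M EX (sinter (pre f C') B)) by (apply M_inter; auto).
    rewrite <- (Hz _ HB' (fun x hx => proj2 hx)).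
    destruct (pre_roundtrip_ae C' B HC' HC'B) as [h1 h2].
    apply (faithful_measure_ae_eq EY P mu (conj Hnull (conj Hadd Hfaith)) HP _ _ N0Y); auto.
    + apply M_inter; auto.
    + intros y hy. apply (HC'C y hy).
    + intros y [_ h]; exact h.
    + apply (N_subset EY h1). intros y [hy hn]. split; [exact hy|]. intros h'. apply hn.
      split; [exact h'|apply (HC'C y hy)].
    + apply (N_subset EY h2). intros y [[hy _] hn]. split; auto. }
  apply (null_of_null_pre EX EY f g Hf Hgf B HB).
  apply (N_subset EY (N_union EY _ _ HCN (ae_identity_pre_sdiff EY _ Hfg P HP))).
  intros y [x [hx hBx]]. destruct (classic (P y)) as [hP|hP]; [left; split; auto|right].
  + exists x; auto.
  + split; [|exact hP]. apply pre_pcomp. exists x. split; [exact hx|apply HBP, hBx].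
Qed.

Section Partition.
Context {I : Type} (P : I -> sset Y) (PM : forall i, M EY (P i))
  (Pdisj : forall i j y, P i y -> P j y -> i = j) (Pcov : forall y, exists i, P i y)
  (PN : forall A, (forall i, N EY (sinter A (P i))) -> N EY A).

Definition pre_pieces (j : option I) : sset X :=
  match j with None => scompl (dom f) | Some i => pre f (P i) end.

Lemma M_pre_pieces j : M EX (pre_pieces j).
Proof. destruct j as [i|]; simpl; [apply fM, PM|apply N_sub_M, (proj1 Hf)]. Qed.

Lemma pre_pieces_disjoint i j x : pre_pieces i x -> pre_pieces j x -> i = j.
Proof.
destruct i as [i|], j as [j|]; simpl; auto.
- intros [y1 [h1 h2]] [y2 [h3 h4]]. rewrite h1 in h3. injection h3 as <-.
  f_equal. apply (Pdisj i j y1); auto.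
- intros [y1 [h1 _]] h. destruct h. exists y1; auto.
- intros h [y1 [h1 _]]. destruct h. exists y1; auto.
Qed.

Lemma pre_pieces_cover x : exists j, pre_pieces j x.
Proof.
destruct (f x) as [y|] eqn:e.
- destruct (Pcov y) as [i hi]. exists (Some i). exists y; auto.
- exists None. intros [y hy]. congruence.
Qed.

Lemma null_of_null_on_pre_pieces R : M EX R -> (forall i, N EX (sinter R (pre f (P i)))) -> N EX R.
Proof.
intros HR HRi. apply (null_of_null_pre EX EY f g Hf Hgf R HR). apply PN. intros i.
apply (N_subset EY (N_union EY _ _ (gN _ (HRi i)) (ae_identity_sdiff_pre EY _ Hfg _ (PM i)))).
intros y [[x [hx hRx]] hy]. destruct (classic (pre (pcomp f g) (P i) y)) as [h|h].
- left. exists x. split; [exact hx|split; [exact hRx|]].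
  apply (pre_Some g _ y x hx), pre_pcomp, h.
- right. split; auto.
Qed.

Lemma sigma_finite_meets_countably_many_pre_pieces F : sigma_finite_set EX F ->
  exists l : nat -> list (option I),
    N EX (sdiff F (fun x => exists n j, In j (l n) /\ pre_pieces j x)).
Proof.
intros [HF [nu Hnu]].
destruct (faithful_measure_ccc EX F nu Hnu HF pre_pieces M_pre_pieces pre_pieces_disjoint)
  as [l Hl].
exists l. apply null_of_null_on_pre_pieces.
- apply M_diff; auto.
  apply (M_ext EX (sbigcup (fun n x => exists j, In j (l n) /\ pre_pieces j x))).
  + intros x; unfold sbigcup; tauto.
  + apply M_bigcup. intros n. apply M_finite_union. intros j _; apply M_pre_pieces.
- intros i. destruct (classic (exists n, In (Some i) (l n))) as [[n hn]|hn].
  + apply (N_subset EX N0X). intros x [[_ h] h']. apply h. exists n, (Some i). auto.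
  + assert (hN : N EX (sinter F (pre_pieces (Some i)))).
    { apply NNPP; intros h. apply hn, Hl, h. }
    apply (N_subset EX hN). intros x [[h _] h']. split; auto.
Qed.

End Partition.

Lemma strictly_localizable_transport :
  locally_determined EX -> strictly_localizable EY -> strictly_localizable EX.
Proof.
intros LDX [I [P [PM [Pdisj [Pcov [Psf [_ PNc]]]]]]].
assert (PN : forall A, (forall i, N EY (sinter A (P i))) -> N EY A) by (intros A; apply PNc).
destruct (locally_determined_partition EX (pre_pieces P) LDX N0X (M_pre_pieces P PM)
            (sigma_finite_meets_countably_many_pre_pieces P PM Pdisj PN)) as [HMc HNc].
exists (option I), (pre_pieces P).
split; [apply M_pre_pieces, PM|split; [apply pre_pieces_disjoint, Pdisj|]].
split; [apply pre_pieces_cover, Pcov|split; [|split; [exact HMc|exact HNc]]].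
intros [i|].
- apply sigma_finite_pre, Psf.
- apply null_sigma_finite, (proj1 Hf).
Qed.

End Isomorphism.

Theorem mainTheorem18 (X Y : Type) (EX : ems X) (EY : ems Y) (f : X -> option Y) :
  ems_iso EX EY f ->
  locally_determined EX -> locally_determined EY ->
  ems_compact EY -> strictly_localizable EY ->
  ems_compact EX /\ strictly_localizable EX.
Proof.
intros [Hf [g [Hg [Hgf Hfg]]]] LDX _ HC HSL. split.
- exact (compact_transport EX EY f g Hf Hg Hgf Hfg HC HSL).
- exact (strictly_localizable_transport EX EY f g Hf Hg Hgf Hfg LDX HSL).
Qed.
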